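(* Let $B$ be a skew left brace and let $I/J$ be a chief factor of $B$ which is an abelian brace. Then $I/J$ is either a Frattini chief factor or a complemented chief factor of $B$. If moreover $B$ is finite, then every complement of $I/J$ in $B/J$ is a maximal subbrace of $B/J$.
   Context: A skew left brace (brace) is a set $B$ with two group structures $(B,+)$ and $(B,\cdot)$ with $a(b+c)=ab-a+ac$; $\lambda_a(b)=-a+ab$. A subbrace is a subset that is a subgroup of both groups; a maximal subbrace is a proper subbrace not contained in any other proper subbrace. An ideal is a subset that is a normal subgroup of both groups and $\lambda_b$-invariant for all $b$. A brace is abelian if $xy=x+y=y+x$ for all elements. For ideals $J\subseteq I$, $I/J$ is a chief factor if it is a minimal nonzero ideal of $B/J$. The Frattini subbrace $\Phi(B)$ is the intersection of all maximal subbraces of $B$ (or $B$ if there are none). $I/J$ is a Frattini chief factor if $I/J\subseteq\Phi(B/J)$, and a complemented chief factor if there is a subbrace $T$ of $B/J$ (a complement) with $B/J=(I/J)T=(I/J)+T$ and $(I/J)\cap T=0$. *)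

From Stdlib Require Import List.

Record skew_brace := SkewBrace {
  carrier :> Type;
  badd : carrier -> carrier -> carrier;
  bopp : carrier -> carrier;
  bzero : carrier;
  bmul : carrier -> carrier -> carrier;
  binv : carrier -> carrier;
  bone : carrier;
  baddA : forall a b c, badd a (badd b c) = badd (badd a b) c;
  badd0l : forall a, badd bzero a = a;
  badd0r : forall a, badd a bzero = a;
  baddNl : forall a, badd (bopp a) a = bzero;
  baddNr : forall a, badd a (bopp a) = bzero;
  bmulA : forall a b c, bmul a (bmul b c) = bmul (bmul a b) c;
  bmul1l : forall a, bmul bone a = a;
  bmul1r : forall a, bmul a bone = a;
  bmulVl : forall a, bmul (binv a) a = bone;
  bmulVr : forall a, bmul a (binv a) = bone;
  bbrace : forall a b c, bmul a (badd b c) = badd (bmul a b) (badd (bopp a) (bmul a c))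
}.

Arguments badd {s}. Arguments bopp {s}. Arguments bzero {s}.
Arguments bmul {s}. Arguments binv {s}. Arguments bone {s}.

Section BraceDefs.
Variable B : skew_brace.

Definition blambda (a b : B) : B := badd (bopp a) (bmul a b).

Definition bset := B -> Prop.

Definition subset (S T : bset) : Prop := forall x, S x -> T x.
Definition set_eq (S T : bset) : Prop := forall x, S x <-> T x.

Definition add_subgroup (S : bset) : Prop :=
  S bzero /\ (forall x y, S x -> S y -> S (badd x y)) /\ (forall x, S x -> S (bopp x)).
Definition mul_subgroup (S : bset) : Prop :=
  S bone /\ (forall x y, S x -> S y -> S (bmul x y)) /\ (forall x, S x -> S (binv x)).

Definition subbrace (S : bset) : Prop := add_subgroup S /\ mul_subgroup S.

Definition proper (S : bset) : Prop := exists x, ~ S x.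

Definition maximal_subbrace (M : bset) : Prop :=
  subbrace M /\ proper M /\
  forall S, subbrace S -> proper S -> subset M S -> set_eq S M.

Definition ideal (S : bset) : Prop :=
  add_subgroup S /\ mul_subgroup S /\
  (forall a x, S x -> S (badd (badd a x) (bopp a))) /\
  (forall a x, S x -> S (bmul (bmul a x) (binv a))) /\
  (forall b x, S x -> S (blambda b x)).

Definition abelian_subbrace (S : bset) : Prop :=
  subbrace S /\
  forall x y, S x -> S y -> bmul x y = badd x y /\ badd x y = badd y x.

Definition minimal_ideal (N : bset) : Prop :=
  ideal N /\ (exists x, N x /\ x <> bzero) /\
  forall K, ideal K -> subset K N -> set_eq K (fun x => x = bzero) \/ set_eq K N.

(* Frattini subbrace: intersection of all maximal subbraces
   (the whole brace if there are none) *)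
Definition frattini (x : B) : Prop := forall M, maximal_subbrace M -> M x.

Definition complement (N T : bset) : Prop :=
  subbrace T /\
  (forall x, exists n t, N n /\ T t /\ x = bmul n t) /\
  (forall x, exists n t, N n /\ T t /\ x = badd n t) /\
  (forall x, N x -> T x -> x = bzero).

Definition finite_brace : Prop := exists l : list B, forall x, In x l.

End BraceDefs.

Arguments subset {B}. Arguments set_eq {B}. Arguments subbrace {B}.
Arguments maximal_subbrace {B}. Arguments ideal {B}. Arguments abelian_subbrace {B}.
Arguments minimal_ideal {B}. Arguments frattini {B}. Arguments complement {B}.

Definition brace_hom (B Q : skew_brace) (f : B -> Q) : Prop :=
  (forall a b, f (badd a b) = badd (f a) (f b)) /\
  (forall a b, f (bmul a b) = bmul (f a) (f b)).

Definition surjective {X Y : Type} (f : X -> Y) : Prop := forall y, exists x, f x = y.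

Definition image {B Q : skew_brace} (f : B -> Q) (S : bset B) : bset Q :=
  fun y => exists x, S x /\ f x = y.

(* Q together with pi : B ->> Q is a model of the quotient brace B/J:
   pi is a surjective brace homomorphism with kernel exactly J. *)
Definition quotient_map (B Q : skew_brace) (J : bset B) (pi : B -> Q) : Prop :=
  brace_hom B Q pi /\ surjective pi /\ forall x, J x <-> pi x = bzero.

(* The statement lives in the quotient brace Q = B/J, where N := pi(I) is a
   minimal ideal that is an abelian brace; so everything reduces to facts
   about a minimal abelian ideal N of an arbitrary skew brace.

   1. Elementary group and brace identities (a.0 = a, 1 = 0, lambda is a
      homomorphism from (B,.) into the permutations of B, ab = a + lambda_a b).
   2. For an ideal N and a subbrace M, the product set N M equals the sum set
      N + M and is a subbrace.
   3. If moreover N is abelian and N M = B, then N /\ M is an ideal of B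
      (it is normalised by N because N is abelian, and by M because N is an
      ideal); by minimality N /\ M is 0 or N.
   4. If N is not in the Frattini subbrace, some maximal subbrace M misses an
      element of N, so N M = B and N /\ M = 0: M is a complement.
   5. Any complement T is maximal: a proper subbrace S containing T again
      satisfies N S = B, and N /\ S = 0 forces S = T. *)

From Stdlib Require Import Classical.

Section BraceAlgebra.
Variable B : skew_brace.

Lemma addKl (a b : B) : badd (bopp a) (badd a b) = b.
Proof. rewrite baddA, baddNl, badd0l. reflexivity. Qed.

Lemma addNKl (a b : B) : badd a (badd (bopp a) b) = b.
Proof. rewrite baddA, baddNr, badd0l. reflexivity. Qed.

Lemma addI (a b c : B) : badd a b = badd a c -> b = c.
Proof. intro H. rewrite <- (addKl a b), <- (addKl a c), H. reflexivity. Qed.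

Lemma oppK (a : B) : bopp (bopp a) = a.
Proof. apply (addI (bopp a)). rewrite baddNr, baddNl. reflexivity. Qed.

Lemma oppD (a b : B) : bopp (badd a b) = badd (bopp b) (bopp a).
Proof.
  apply (addI (badd a b)).
  rewrite baddNr, baddA, <- (baddA _ a b), baddNr, badd0r, baddNr. reflexivity.
Qed.

Lemma opp0 : bopp (@bzero B) = bzero.
Proof. rewrite <- (badd0r _ (bopp bzero)). apply baddNl. Qed.

Lemma mulKl (a b : B) : bmul (binv a) (bmul a b) = b.
Proof. rewrite bmulA, bmulVl, bmul1l. reflexivity. Qed.

Lemma mulI (a b c : B) : bmul a b = bmul a c -> b = c.
Proof. intro H. rewrite <- (mulKl a b), <- (mulKl a c), H. reflexivity. Qed.

Lemma invK (a : B) : binv (binv a) = a.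
Proof. apply (mulI (binv a)). rewrite bmulVr, bmulVl. reflexivity. Qed.

Lemma invM (a b : B) : binv (bmul a b) = bmul (binv b) (binv a).
Proof.
  apply (mulI (bmul a b)).
  rewrite bmulVr, bmulA, <- (bmulA _ a b), bmulVr, bmul1r, bmulVr. reflexivity.
Qed.

(* The brace axiom with b = c = 0 gives a.0 = a, hence the two identities agree. *)
Lemma mulr0 (a : B) : bmul a bzero = a.
Proof.
  pose proof (bbrace B a bzero bzero) as H. rewrite badd0l in H.
  assert (Hl : badd (bopp a) (bmul a bzero) = bzero).
  { apply (addI (bmul a bzero)). rewrite badd0r. symmetry. exact H. }
  rewrite <- (addNKl a (bmul a bzero)), Hl, badd0r. reflexivity.
Qed.

Lemma one_zero : (@bone B) = bzero.
Proof. transitivity (bmul (@bone B) bzero); [symmetry; apply mulr0 | apply bmul1l]. Qed.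

Lemma lambdaM (a b x : B) : blambda B a (blambda B b x) = blambda B (bmul a b) x.
Proof.
  unfold blambda. rewrite bbrace.
  assert (Hopp : badd (bopp a) (bmul a (bopp b)) = badd (bopp (bmul a b)) a).
  { pose proof (bbrace B a b (bopp b)) as H. rewrite baddNr, mulr0 in H.
    rewrite <- (addKl (bmul a b) (badd (bopp a) (bmul a (bopp b)))), <- H.
    reflexivity. }
  rewrite baddA, Hopp, bmulA, <- baddA, addNKl. reflexivity.
Qed.

Lemma lambda1 (y : B) : blambda B bone y = y.
Proof. unfold blambda. rewrite bmul1l, one_zero, opp0, badd0l. reflexivity. Qed.

Lemma mul_lambda (a b : B) : bmul a b = badd a (blambda B a b).
Proof. unfold blambda. rewrite addNKl. reflexivity. Qed.

Definition prod_set (N M : bset B) : bset B :=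
  fun x => exists n m, N n /\ M m /\ x = bmul n m.
Definition sum_set (N M : bset B) : bset B :=
  fun x => exists n m, N n /\ M m /\ x = badd n m.

Section IdealTimesSubbrace.
Variables N M : bset B.
Hypothesis hN : ideal N.
Hypothesis hM : subbrace M.

(* N M = N + M: conjugate the N-factor past the M-factor, and translate between
   the two operations with ab = a + lambda_a b. *)
Lemma prod_sum_set (x : B) : prod_set N M x <-> sum_set N M x.
Proof.
  destruct hN as [[N0 [NA NO]] [[N1 [NM NI]] [NCa [NCm NL]]]].
  split.
  - intros [n [m [Hn [Hm ->]]]].
    set (n' := bmul (bmul (binv m) n) (binv (binv m))).
    assert (Hmn : bmul m n' = bmul n m).
    { unfold n'. rewrite invK, !bmulA, bmulVr, bmul1l. reflexivity. }
    exists (badd (badd m (blambda B m n')) (bopp m)), m.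
    split; [apply NCa, NL, NCm, Hn | split; [exact Hm |]].
    rewrite <- baddA, baddNl, badd0r, <- mul_lambda, Hmn. reflexivity.
  - intros [n [m [Hn [Hm ->]]]].
    set (n' := blambda B (binv m) (badd (badd (bopp m) n) (bopp (bopp m)))).
    exists (bmul (bmul m n') (binv m)), m.
    split; [apply NCm, NL, NCa, Hn | split; [exact Hm |]].
    rewrite <- bmulA, bmulVl, bmul1r, mul_lambda. unfold n'.
    rewrite lambdaM, bmulVr, lambda1, oppK, !baddA, baddNr, badd0l. reflexivity.
Qed.

(* N M is a subbrace: closure under products uses the product form, closure
   under sums the sum form. *)
Lemma prod_set_subbrace : subbrace (prod_set N M).
Proof.
  pose proof prod_sum_set as D.
  destruct hN as [[N0 [NA NO]] [[N1 [NM NI]] [NCa [NCm NL]]]].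
  destruct hM as [[M0 [MA MO]] [M1 [MM MI]]].
  split; [split; [| split] | split; [| split]].
  - apply D. exists bzero, bzero. rewrite badd0l. auto.
  - intros x y Hx Hy. apply D in Hx, Hy. apply D.
    destruct Hx as [n1 [m1 [Hn1 [Hm1 ->]]]], Hy as [n2 [m2 [Hn2 [Hm2 ->]]]].
    exists (badd n1 (badd (badd m1 n2) (bopp m1))), (badd m1 m2).
    split; [apply NA; [exact Hn1 | apply NCa, Hn2] | split; [apply MA; assumption |]].
    rewrite !baddA, <- (baddA _ _ (bopp m1) m1), baddNl, badd0r. reflexivity.
  - intros x Hx. apply D in Hx. apply D.
    destruct Hx as [n [m [Hn [Hm ->]]]].
    exists (badd (badd (bopp m) (bopp n)) (bopp (bopp m))), (bopp m).
    split; [apply NCa, NO, Hn | split; [apply MO, Hm |]].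
    rewrite oppK, oppD, <- baddA, baddNr, badd0r. reflexivity.
  - exists bone, bone. rewrite bmul1l. auto.
  - intros x y [n1 [m1 [Hn1 [Hm1 ->]]]] [n2 [m2 [Hn2 [Hm2 ->]]]].
    exists (bmul n1 (bmul (bmul m1 n2) (binv m1))), (bmul m1 m2).
    split; [apply NM; [exact Hn1 | apply NCm, Hn2] | split; [apply MM; assumption |]].
    rewrite !bmulA, <- (bmulA _ _ (binv m1) m1), bmulVl, bmul1r. reflexivity.
  - intros x [n [m [Hn [Hm ->]]]].
    exists (bmul (bmul (binv m) (binv n)) (binv (binv m))), (binv m).
    split; [apply NCm, NI, Hn | split; [apply MI, Hm |]].
    rewrite invK, invM, <- bmulA, bmulVr, bmul1r. reflexivity.
Qed.

End IdealTimesSubbrace.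

Lemma abelian_lambda (N : bset B) : abelian_subbrace N ->
  forall n y, N n -> N y -> blambda B n y = y.
Proof.
  intros [_ hab] n y Hn Hy. destruct (hab n y Hn Hy) as [E _].
  unfold blambda. rewrite E, addKl. reflexivity.
Qed.

Lemma abelian_mulC (N : bset B) : abelian_subbrace N ->
  forall x y, N x -> N y -> bmul x y = bmul y x.
Proof.
  intros [_ hab] x y Hx Hy.
  destruct (hab x y Hx Hy) as [E1 E2], (hab y x Hy Hx) as [E3 _].
  rewrite E1, E2, E3. reflexivity.
Qed.

(* Conjugating or applying lambda by b = n m acts on
   N /\ M first through m (which preserves N and M) and then through n (which
   acts trivially on N since N is abelian). *)
Lemma abelian_meet_ideal (N M : bset B) : ideal N -> abelian_subbrace N ->
  subbrace M -> (forall x, prod_set N M x) -> ideal (fun x => N x /\ M x).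
Proof.
  intros hN hab hM hNM.
  assert (hNMa : forall x, sum_set N M x) by (intro; apply prod_sum_set; auto).
  pose proof (abelian_lambda N hab) as Nlam.
  pose proof (abelian_mulC N hab) as NmulC.
  destruct hab as [_ hab].
  destruct hN as [[N0 [NA NO]] [[N1 [NM NI]] [NCa [NCm NL]]]].
  destruct hM as [[M0 [MA MO]] [M1 [MM MI]]].
  split; [| split; [| split; [| split]]].
  - split; [| split]; [tauto | intros x y [] []; auto | intros x []; auto].
  - split; [| split]; [tauto | intros x y [] []; auto | intros x []; auto].
  - intros a x [Nx Mx]. destruct (hNMa a) as [n [m [Hn [Hm ->]]]].
    set (y := badd (badd m x) (bopp m)).
    assert (Ny : N y) by (apply NCa, Nx).
    assert (My : M y) by (apply MA; [apply MA | apply MO]; assumption).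
    replace (badd (badd (badd n m) x) (bopp (badd n m)))
      with (badd (badd n y) (bopp n)) by (unfold y; rewrite oppD, !baddA; reflexivity).
    destruct (hab n y Hn Ny) as [_ E]. rewrite E, <- baddA, baddNr, badd0r. auto.
  - intros a x [Nx Mx]. destruct (hNM a) as [n [m [Hn [Hm ->]]]].
    set (y := bmul (bmul m x) (binv m)).
    assert (Ny : N y) by (apply NCm, Nx).
    assert (My : M y) by (apply MM; [apply MM | apply MI]; assumption).
    replace (bmul (bmul (bmul n m) x) (binv (bmul n m)))
      with (bmul (bmul n y) (binv n)) by (unfold y; rewrite invM, !bmulA; reflexivity).
    rewrite (NmulC n y Hn Ny), <- bmulA, bmulVr, bmul1r. auto.
  - intros b x [Nx Mx]. destruct (hNM b) as [n [m [Hn [Hm ->]]]].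
    rewrite <- lambdaM.
    assert (Ny : N (blambda B m x)) by (apply NL, Nx).
    assert (My : M (blambda B m x)) by (apply MA; [apply MO | apply MM]; assumption).
    rewrite (Nlam n _ Hn Ny). auto.
Qed.

Lemma minimal_meet_supplement (N M : bset B) : minimal_ideal N ->
  abelian_subbrace N -> subbrace M -> (forall x, prod_set N M x) ->
  (forall x, N x -> M x -> x = bzero) \/ subset N M.
Proof.
  intros [hN [_ hmin]] hab hM hNM.
  destruct (hmin _ (abelian_meet_ideal N M hN hab hM hNM) (fun z Hz => proj1 Hz))
    as [H0 | HN].
  - left. intros x Nx Mx. apply H0. auto.
  - right. intros x Nx. apply HN, Nx.
Qed.

(* A maximal subbrace missing an element of the ideal N is supplemented by N:
   N M is a subbrace strictly above M, so it must be all of B. *)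
Lemma maximal_supplement (N M : bset B) (x : B) : ideal N ->
  maximal_subbrace M -> N x -> ~ M x -> forall y, prod_set N M y.
Proof.
  intros hN [hM [_ hmax]] Nx Mx y. apply NNPP. intro Hy.
  assert (hN1 : N bone) by apply hN.
  assert (hM1 : M bone) by apply hM.
  assert (Heq : set_eq (prod_set N M) M).
  { apply hmax; [apply prod_set_subbrace; auto | exists y; exact Hy |].
    intros z Mz. exists bone, z. rewrite bmul1l. auto. }
  apply Mx, Heq. exists x, bone. rewrite bmul1r. auto.
Qed.

Section MinimalAbelianIdeal.
Variable N : bset B.
Hypothesis hN : minimal_ideal N.
Hypothesis hab : abelian_subbrace N.

Lemma frattini_or_complemented : subset N frattini \/ exists T, complement N T.
Proof.
  destruct (classic (subset N frattini)) as [Hfr | Hfr]; [left; exact Hfr | right].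
  apply not_all_ex_not in Hfr. destruct Hfr as [x Hx].
  apply imply_to_and in Hx. destruct Hx as [Nx Fx].
  apply not_all_ex_not in Fx. destruct Fx as [M HM].
  apply imply_to_and in HM. destruct HM as [Mmax Mx].
  assert (hNi : ideal N) by apply hN.
  assert (hM : subbrace M) by apply Mmax.
  pose proof (maximal_supplement N M x hNi Mmax Nx Mx) as hNM.
  exists M. split; [exact hM | split; [exact hNM | split]].
  - intro y. apply prod_sum_set; auto.
  - destruct (minimal_meet_supplement N M hN hab hM hNM) as [H0 | HNM];
      [exact H0 | exfalso; apply Mx, HNM, Nx].
Qed.

(* A proper
   subbrace S above T is supplemented by N; N is not inside S (else S = B),
   so N /\ S = 0 and every s = n t in S has n = s t^-1 in N /\ S, i.e. s = t. *)
Lemma complement_maximal (T : bset B) : complement N T -> maximal_subbrace T.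
Proof.
  intros [hT [hNT [_ Tdis]]].
  destruct hN as [_ [[x0 [Nx0 x0nz]] _]].
  split; [exact hT | split; [exists x0; intro Tx0; apply x0nz, Tdis; assumption |]].
  intros S hS [s0 Ss0] TS.
  assert (hNS : forall y, prod_set N S y).
  { intro y. destruct (hNT y) as [n [t [Nn [Tt E]]]]. exists n, t. auto. }
  destruct hS as [hSa [S1 [SM SI]]].
  destruct (minimal_meet_supplement N S hN hab (conj hSa (conj S1 (conj SM SI))) hNS)
    as [H0 | HNS].
  - intro y. split; [intro Sy | apply TS].
    destruct (hNT y) as [n [t [Nn [Tt E]]]].
    assert (Sn : S n).
    { replace n with (bmul y (binv t)) by (rewrite E, <- bmulA, bmulVr, bmul1r; reflexivity).
      apply SM; [exact Sy | apply SI, TS, Tt]. }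
    rewrite E, (H0 n Nn Sn), <- one_zero, bmul1l. exact Tt.
  - exfalso. apply Ss0. destruct (hNT s0) as [n [t [Nn [Tt ->]]]].
    apply SM; [apply HNS, Nn | apply TS, Tt].
Qed.

End MinimalAbelianIdeal.

End BraceAlgebra.

Theorem lemma4p12 (B : skew_brace) (I J : bset B)
  (hI : ideal I) (hJ : ideal J) (hJI : subset J I)
  (Q : skew_brace) (pi : B -> Q) (hpi : quotient_map B Q J pi)
  (hchief : minimal_ideal (image pi I))
  (habel : abelian_subbrace (image pi I)) :
  (subset (image pi I) frattini \/ exists T, complement (image pi I) T) /\
  (finite_brace B -> forall T, complement (image pi I) T -> maximal_subbrace T).
Proof.
  split.
  - exact (frattini_or_complemented Q _ hchief habel).
  - intros _ T hT. exact (complement_maximal Q _ hchief habel T hT).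
Qed.
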